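(* Fix $s,b\ge1$ and let $\{a_i\}$ be the $(s,b)$-Generacci sequence, with $a_i=0$ for $i\le0$. For $n,k\ge0$ let $p_{n,k}$ be the number of $m\in[a_{(n-1)b+1},a_{nb+1})$ whose legal decomposition has exactly $k$ summands, and $q_{n,k}$ the number of $m\in[0,a_{nb+1})$ whose legal decomposition has exactly $k$ summands. Then \[p_{n,k}=\begin{cases}1 & n=k=0,\\ b & 1\le n\le s,\ k=1,\\ b\,q_{n-(s+1),k-1} & n\ge s+1,\ 1\le k\le \frac{n+s}{s+1},\\ 0&\text{otherwise.}\end{cases}\] Moreover, with $n_*=\lceil\frac{n+s}{s+1}\rceil$, the generating function $F(x,y)=\sum_{n\ge0}\sum_{k=0}^{n_*}p_{n,k}x^ny^k$ equals \[F(x,y)=1+\frac{byx}{1-x-byx^{s+1}}.\]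
   Context: Fix integers $s,b\ge1$. For an increasing sequence of positive integers $\{a_i\}_{i\ge1}$ define bins $\mathcal{B}_n=\{a_{b(n-1)+1},\dots,a_{bn}\}$ for $n\ge1$, $\mathcal{B}_j=\emptyset$ for $j\le0$. A decomposition $m=a_{\ell_1}+\dots+a_{\ell_k}$ with $a_{\ell_1}>\dots>a_{\ell_k}$ is an $(s,b)$-Generacci legal decomposition if $\{a_{\ell_i},a_{\ell_{i+1}}\}\not\subset\mathcal{B}_{j-s}\cup\dots\cup\mathcal{B}_j$ for all $i,j$. The $(s,b)$-Generacci sequence is the increasing sequence in which each $a_i$ is the smallest positive integer with no legal decomposition using $a_1,\dots,a_{i-1}$; every nonnegative integer has a unique legal decomposition ($0$ being the empty sum). *)

From mathcomp Require Import all_boot all_algebra.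
From mathcomp Require Import boolp.
Set Implicit Arguments. Unset Strict Implicit. Unset Printing Implicit Defensive.
Import GRing.Theory Num.Theory.

(* Sequences are a : nat -> nat; only the positive indices are meaningful. *)

(* the value v belongs to bin B_t = {a_(b(t-1)+1), ..., a_(bt)};
   for t = 0 the index range is empty (B_j = empty for j <= 0). *)
Definition in_bin (a : nat -> nat) (b : nat) (v t : nat) : Prop :=
  exists2 i, (b * (t - 1) < i <= b * t)%N & a i = v.

(* v belongs to B_(j-s) u ... u B_j  (bins of index <= 0 are empty, so
   it suffices to quantify over natural j and t). *)
Definition in_window (a : nat -> nat) (s b : nat) (v j : nat) : Prop :=
  exists t, [/\ (t <= j)%N, (j <= t + s)%N & in_bin a b v t].

Definition legal (a : nat -> nat) (s b : nat) (L : seq nat) : Prop :=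
  [/\ all (fun i => 0 < i)%N L,
      (forall i, (i.+1 < size L)%N -> a (nth 0 L i.+1) < a (nth 0 L i))%N &
      (forall i j, (i.+1 < size L)%N ->
         ~ (in_window a s b (a (nth 0 L i)) j /\
            in_window a s b (a (nth 0 L i.+1)) j))].

Definition has_legal_dec_below (a : nat -> nat) (s b bnd m : nat) : Prop :=
  exists L, [/\ legal a s b L, all (fun i => i < bnd)%N L &
                (\sum_(i <- L) a i)%N = m].

Definition is_generacci (s b : nat) (a : nat -> nat) : Prop :=
  (forall i, 0 < i -> a i < a i.+1)%N /\
  (forall i, 0 < i ->
     [/\ (0 < a i)%N, ~ has_legal_dec_below a s b i (a i) &
         forall m, (0 < m < a i)%N -> has_legal_dec_below a s b i m]).

Definition legal_dec_size (a : nat -> nat) (s b m k : nat) : Prop :=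
  exists L, [/\ legal a s b L, (\sum_(i <- L) a i)%N = m & size L = k].

Definition count_range (a : nat -> nat) (s b lo hi k : nat) : nat :=
  count (fun m => `[< legal_dec_size a s b m k >]) (iota lo (hi - lo)).

(* a_((n-1)b+1), with the convention a_i = 0 for i <= 0 (relevant for n = 0) *)
Definition lowA (a : nat -> nat) (b n : nat) : nat :=
  if n is n'.+1 then a (n' * b + 1)%N else 0%N.

Definition pnk (a : nat -> nat) (s b n k : nat) : nat :=
  count_range a s b (lowA a b n) (a (n * b + 1)%N) k.

Definition qnk (a : nat -> nat) (s b n k : nat) : nat :=
  count_range a s b 0 (a (n * b + 1)%N) k.

(* n_* = ceil((n+s)/(s+1)) *)
Definition nstar (s n : nat) : nat := ((n + s + s) %/ s.+1)%N.

Local Open Scope ring_scope.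

(* formal power series in x with coefficients in Z[y]: coefficient of x^n *)
Definition fps := nat -> {poly int}.

Definition fps_mul (f g : fps) : fps :=
  fun n => \sum_(i < n.+1) f i * g (n - i)%N.

Definition genF (a : nat -> nat) (s b : nat) : fps :=
  fun n => \sum_(0 <= k < (nstar s n).+1) (pnk a s b n k)%:R * 'X^k.

Definition fps_one : fps := fun n => (n == 0)%:R.

Definition fps_sub (f g : fps) : fps := fun n => f n - g n.

(* denominator 1 - x - b y x^(s+1) *)
Definition denomD (s b : nat) : fps :=
  fun n => (n == 0)%:R - (n == 1)%:R - (n == s.+1)%:R * (b%:R * 'X).

Definition numerN (b : nat) : fps := fun n => (n == 1)%:R * (b%:R * 'X).

(* Two summands a_x > a_y may be adjacent in a legal decomposition iff
   bin y + s < bin x, i.e. iff y < c(x) where c(x) is the first index of the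
   bin lying s + 1 bins below that of x.  By strong induction on i, the legal
   decompositions using a_1, ..., a_(i-1) represent every m < a_i, all their
   sums are below a_i, and a_(i+1) = a_i + a_(c(i)); hence legal
   decompositions are unique, and the m in [a_i, a_(i+1)) are exactly a_i
   plus a legal decomposition of a number below a_(c(i)), with one more
   summand.  As c(i) = (n-s-1)b + 1 throughout the n-th bin, each of its b
   indices contributes q_(n-s-1,k-1) numbers with k summands; this is the
   formula for p_(n,k).  Together with q_(n,k) = q_(n-1,k) + p_(n,k) it shows
   that the coefficients r_(n,k) of F - 1 satisfy
   r_(n,k) = r_(n-1,k) + b r_(n-s-1,k-1) + b [n = k = 1], which is the
   functional equation (1 - x - b y x^(s+1)) (F - 1) = b y x. *)

From mathcomp Require Import all_boot all_algebra zify.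
From mathcomp Require Import boolp.
Import GRing.Theory.
Set Implicit Arguments. Unset Strict Implicit. Unset Printing Implicit Defensive.

Lemma sum_ord_delta (R : pzRingType) n j (F : nat -> R) :
  (\sum_(i < n) ((i == j :> nat)%:R * F i) = (j < n)%:R * F j)%R.
Proof.
elim: n => [|n IH]; first by rewrite big_ord0 mul0r.
rewrite big_ord_recr /= IH ltnS.
by case: (ltngtP j n) => [_|_|->]; rewrite !mulr0n ?mul0r ?addr0 ?add0r.
Qed.

Section Generacci.
Variables s b : nat.
Hypothesis b_gt0 : 0 < b.

Definition bin (i : nat) : nat := (i.-1 %/ b).+1.

(* The summands allowed after a_i in a legal decomposition are the a_j with
   j < succ_bound i, the first index of bin B_(bin i - s) (or 1 if that bin
   is empty). *)
Definition succ_bound (i : nat) : nat := (bin i - s.+1) * b + 1.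

Lemma binP x t : 0 < x -> (b * (t - 1) < x <= b * t) = (t == bin x).
Proof.
move=> x_gt0; rewrite /bin; apply/idP/eqP.
- case: t => [|t] /andP[lo hi]; first by rewrite muln0 in hi; lia.
  congr S; apply/eqP; rewrite eqn_leq leq_divRL //; apply/andP; split; first nia.
  by rewrite -ltnS ltn_divLR //; nia.
- move=> ->; have lo := leq_divM x.-1 b.
  have hi : x.-1 < (x.-1 %/ b).+1 * b by rewrite -ltn_divLR.
  apply/andP; split; nia.
Qed.

Lemma leq_bin : {homo bin : x y / x <= y}.
Proof. by move=> x y le_xy; rewrite /bin ltnS leq_div2r // -!subn1 leq_sub2r. Qed.

Lemma bin_leq y n : 0 < y -> (bin y <= n) = (y <= n * b).
Proof. by move=> y_gt0; rewrite /bin ltn_divLR //; lia. Qed.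

Lemma bin_block n j : j < b -> bin (n * b + 1 + j) = n.+1.
Proof.
by move=> lt_jb; rewrite /bin -addnA add1n addnS /= divnMDl // divn_small // addn0.
Qed.

Lemma succ_bound_gt0 x : 0 < succ_bound x.
Proof. by rewrite /succ_bound addn1. Qed.

Lemma succ_bound_le x : 0 < x -> succ_bound x <= x.
Proof.
move=> x_gt0; rewrite /succ_bound /bin; have := leq_divM x.-1 b.
set q := x.-1 %/ b => le_qb; have := leq_mul (leq_subr s.+1 q.+1) (leqnn b).
rewrite mulSn; lia.
Qed.

Lemma succ_boundE x y : 0 < y -> (y < succ_bound x) = (bin y + s < bin x).
Proof.
move=> y_gt0; rewrite /succ_bound addn1 ltnS -bin_leq // /bin.
by move: (x.-1 %/ b) (y.-1 %/ b) => u v; lia.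
Qed.

Lemma succ_bound_block n j : j < b -> succ_bound (n * b + 1 + j) = (n - s) * b + 1.
Proof. by move=> lt_jb; rewrite /succ_bound bin_block // subSS. Qed.

Lemma lt_succ_bound_trans : transitive (fun i j => j < succ_bound i).
Proof.
move=> y x z /= lt_yx; case: y lt_yx => [|y] lt_yx lt_zy.
  by rewrite /succ_bound /bin /= div0n subSS sub0n in lt_zy; case: z lt_zy.
exact: leq_trans lt_zy (leq_trans (succ_bound_le _) (ltnW lt_yx)).
Qed.

Definition legalb (L : seq nat) : bool :=
  all (fun i => 0 < i) L && sorted (fun i j => j < succ_bound i) L.

Lemma legalb_cons x L :
  legalb (x :: L) = [&& 0 < x, all (fun j => j < succ_bound x) L & legalb L].
Proof.
rewrite /legalb /= (path_sortedE lt_succ_bound_trans).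
by rewrite andbACA -andbA.
Qed.

Lemma legalb_lt_head x L : legalb (x :: L) -> all (fun j => j < x) L.
Proof.
rewrite legalb_cons => /and3P[x_gt0 L_lt _]; apply: sub_all L_lt => j lt_j.
exact: leq_trans lt_j (succ_bound_le x_gt0).
Qed.

Lemma legalb_size_bin x L : legalb (x :: L) -> size L * s.+1 < bin x.
Proof.
elim: L x => [|y L IH] x; first by rewrite /bin.
rewrite legalb_cons /= => /and3P[_ /andP[lt_yx _] Ly].
have := IH y Ly; move: Ly; rewrite legalb_cons => /and3P[y_gt0 _ _].
rewrite succ_boundE // in lt_yx; lia.
Qed.

Section Sequence.
Variable a : nat -> nat.
Hypothesis gen_a : is_generacci s b a.

Local Notation sum_a L := (\sum_(i <- L) a i).

Lemma homo_a : {in [pred i | 0 < i] &, {homo a : i j / i < j}}.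
Proof.
apply: homo_ltn_in => [y x z|i j /= i_gt0 _ k /andP[lt_ik _]|i /= i_gt0 _].
- exact: ltn_trans.
- exact: ltn_trans lt_ik.
- exact: gen_a.1.
Qed.

Lemma ltn_a i j : 0 < i -> 0 < j -> (a i < a j) = (i < j).
Proof. by move=> *; apply: (leqW_mono_in (leq_mono_in homo_a)). Qed.

Lemma leq_a i j : 0 < i -> 0 < j -> (a i <= a j) = (i <= j).
Proof. by move=> *; apply: (leq_mono_in homo_a). Qed.

Lemma a_inj i j : 0 < i -> 0 < j -> a i = a j -> i = j.
Proof. by move=> *; apply: (incn_inj_in (leq_mono_in homo_a)). Qed.

Lemma a_gt0 i : 0 < i -> 0 < a i.
Proof. by move=> /gen_a.2 []. Qed.

Lemma in_bin_a x t : 0 < x -> in_bin a b (a x) t <-> t = bin x.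
Proof.
move=> x_gt0; split=> [[i range_i eq_ai]|->]; last by exists x; rewrite ?binP.
have i_gt0 : 0 < i by case/andP: range_i; lia.
by move: range_i; rewrite (a_inj i_gt0 x_gt0 eq_ai) binP // => /eqP.
Qed.

Lemma in_window_a x j : 0 < x ->
  in_window a s b (a x) j <-> bin x <= j <= bin x + s.
Proof.
move=> x_gt0; split=> [[t [le_tj le_jt /(in_bin_a _ x_gt0) eq_t]]|/andP[lo hi]].
  by subst t; rewrite le_tj.
by exists (bin x); split => //; apply/in_bin_a.
Qed.

Lemma consecutive_legalE x y : 0 < x -> 0 < y ->
  (a y < a x /\ forall j, ~ (in_window a s b (a x) j /\ in_window a s b (a y) j))
  <-> y < succ_bound x.
Proof.
move=> x_gt0 y_gt0; rewrite ltn_a // succ_boundE //; split.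
- move=> [lt_yx disjoint]; have := leq_bin (ltnW lt_yx).
  case: (ltnP (bin y + s) (bin x)) => // le_xy le_bin; exfalso.
  by apply: (disjoint (bin x)); rewrite !in_window_a //; lia.
- move=> lt_bin; split=> [|j]; last by rewrite !in_window_a //; lia.
  by case: (ltnP y x) => // le_xy; have := leq_bin le_xy; lia.
Qed.

Lemma legalP L : legal a s b L <-> legalb L.
Proof.
rewrite /legal /legalb; split.
- case=> L_gt0 decr disjoint; rewrite L_gt0; apply/(sortedP 0) => i lt_iL.
  have gt0_nth j : j < size L -> 0 < nth 0 L j by move/(all_nthP 0 L_gt0).
  apply/consecutive_legalE; rewrite ?gt0_nth //; first exact: ltnW.
  by split=> [|j]; [apply: decr | apply: disjoint].
- case/andP=> L_gt0 /(sortedP 0) sorted_L.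
  have gt0_nth j : j < size L -> 0 < nth 0 L j by move/(all_nthP 0 L_gt0).
  have cons_i i : i.+1 < size L -> _ := fun lt_iL =>
    (consecutive_legalE (gt0_nth i (ltnW lt_iL)) (gt0_nth i.+1 lt_iL)).2
      (sorted_L i lt_iL).
  by split=> // [i /cons_i []|i j /cons_i [_]].
Qed.

Lemma has_legal_dec_belowP i m : has_legal_dec_below a s b i m <->
  exists L, [/\ legalb L, all (fun j => j < i) L & sum_a L = m].
Proof. by split; case=> L [L_legal L_below sum_L]; exists L; split=> //; apply/legalP. Qed.

Definition dec_cover i N := forall m, m < N -> has_legal_dec_below a s b i m.

Definition dec_bound i N :=
  forall L, legalb L -> all (fun j => j < i) L -> sum_a L < N.

Lemma generacci_eq i N : 0 < i -> dec_cover i N -> dec_bound i N -> a i = N.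
Proof.
move=> i_gt0 cover bound; have [_ no_dec min_ai] := gen_a.2 i i_gt0.
case: (ltngtP (a i) N) => // [lt_aN|lt_Na]; first by case: no_dec; apply: cover.
have N_gt0 : 0 < N by have := bound [::] isT isT; rewrite big_nil.
have := min_ai N; rewrite N_gt0 lt_Na => /(_ isT) /has_legal_dec_belowP.
by case=> L [L_legal L_below sum_L]; have := bound L L_legal L_below; rewrite sum_L ltnn.
Qed.

Lemma dec_cover1 : dec_cover 1 1.
Proof.
move=> m; rewrite ltnS leqn0 => /eqP->; apply/has_legal_dec_belowP.
by exists [::]; rewrite big_nil.
Qed.

Lemma dec_bound1 : dec_bound 1 1.
Proof.
case=> [|x L]; first by rewrite big_nil.
by rewrite legalb_cons => /and3P[x_gt0 _ _] /= /andP[]; lia.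
Qed.

Lemma a1 : a 1 = 1.
Proof. exact: generacci_eq (ltn0Sn 0) dec_cover1 dec_bound1. Qed.

Section Step.
Variable i : nat.
Hypothesis i_gt0 : 0 < i.

Lemma dec_cover_succ : dec_cover i (a i) ->
  dec_cover (succ_bound i) (a (succ_bound i)) ->
  dec_cover i.+1 (a i + a (succ_bound i)).
Proof.
move=> cover_i cover_c m lt_m; apply/has_legal_dec_belowP.
case: (ltnP m (a i)) => [lt_mi|le_im].
  have /has_legal_dec_belowP[L [L_legal L_below sum_L]] := cover_i m lt_mi.
  by exists L; split=> //; apply: sub_all L_below => j /ltnW.
have /has_legal_dec_belowP[L [L_legal L_below sum_L]] :
    has_legal_dec_below a s b (succ_bound i) (m - a i) by apply: cover_c; lia.
exists (i :: L); split; first by rewrite legalb_cons i_gt0 L_below.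
- rewrite /= ltnSn; apply: sub_all L_below => j lt_j.
  by have := succ_bound_le i_gt0; lia.
- by rewrite big_cons sum_L; lia.
Qed.

Lemma dec_bound_succ : dec_bound i (a i) ->
  dec_bound (succ_bound i) (a (succ_bound i)) ->
  dec_bound i.+1 (a i + a (succ_bound i)).
Proof.
move=> bound_i bound_c [|x L] xL_legal; first by rewrite big_nil addn_gt0 a_gt0.
rewrite /= ltnS leq_eqVlt => /andP[/orP[/eqP eq_xi|lt_xi] _].
  move: xL_legal; rewrite eq_xi legalb_cons => /and3P[_ L_lt L_legal].
  by rewrite big_cons ltn_add2l bound_c.
apply: ltn_addr; apply: bound_i => //=; rewrite lt_xi /=.
by apply: sub_all (legalb_lt_head xL_legal) => j /ltn_trans; apply.
Qed.

End Step.

Lemma dec_cover_bound i : 0 < i -> dec_cover i (a i) /\ dec_bound i (a i).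
Proof.
elim/ltn_ind: i => -[//|[|i]] IH _.
  by rewrite a1; split; [exact: dec_cover1 | exact: dec_bound1].
have [cover_i bound_i] := IH i.+1 (ltnSn _) isT.
have lt_c := leq_ltn_trans (succ_bound_le (ltn0Sn i)) (ltnSn _).
have [cover_c bound_c] := IH _ lt_c (succ_bound_gt0 _).
have cover := dec_cover_succ (ltn0Sn i) cover_i cover_c.
have bound := dec_bound_succ (ltn0Sn i) bound_i bound_c.
by rewrite (generacci_eq (ltn0Sn _) cover bound).
Qed.

Lemma a_succ i : 0 < i -> a i.+1 = a i + a (succ_bound i).
Proof.
move=> i_gt0; have [cover_i bound_i] := dec_cover_bound i_gt0.
have [cover_c bound_c] := dec_cover_bound (succ_bound_gt0 i).
exact: generacci_eq (ltn0Sn _) (dec_cover_succ i_gt0 cover_i cover_c)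
                        (dec_bound_succ i_gt0 bound_i bound_c).
Qed.

Lemma legalb_sum_lt_a_succ x L : legalb (x :: L) -> sum_a (x :: L) < a x.+1.
Proof.
rewrite legalb_cons => /and3P[x_gt0 L_lt L_legal].
by rewrite a_succ // big_cons ltn_add2l (dec_cover_bound (succ_bound_gt0 x)).2.
Qed.

Lemma legalb_sum_inj L1 L2 : legalb L1 -> legalb L2 -> sum_a L1 = sum_a L2 -> L1 = L2.
Proof.
elim: L1 L2 => [|x L1 IH] [|y L2] //.
- rewrite legalb_cons big_nil big_cons => _ /and3P[y_gt0 _ _].
  by have := a_gt0 y_gt0; lia.
- rewrite legalb_cons big_nil big_cons => /and3P[x_gt0 _ _] _.
  by have := a_gt0 x_gt0; lia.
(* A legal sum with leading summand a_x lies below a_(x+1). *)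
move=> xL yL eq_sum; case: (ltngtP x y) => [lt_xy|lt_yx|eq_xy].
- have : a x.+1 <= a y by rewrite leq_a // (leq_ltn_trans (leq0n x) lt_xy).
  by have := legalb_sum_lt_a_succ xL; rewrite eq_sum big_cons; lia.
- have : a y.+1 <= a x by rewrite leq_a // (leq_ltn_trans (leq0n y) lt_yx).
  by have := legalb_sum_lt_a_succ yL; rewrite -eq_sum big_cons; lia.
subst y; move: xL yL eq_sum; rewrite !legalb_cons !big_cons.
by move=> /and3P[_ _ L1_legal] /and3P[_ _ L2_legal] /addnI/IH->.
Qed.

Lemma legalb_below_of_sum_lt L c : legalb L -> 0 < c -> sum_a L < a c ->
  all (fun j => j < c) L.
Proof.
case/andP=> L_gt0 _ c_gt0 lt_sum; apply/allP => x x_in.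
rewrite -(ltn_a (allP L_gt0 x x_in) c_gt0); apply: leq_ltn_trans lt_sum.
by rewrite (big_rem x x_in) leq_addr.
Qed.

Lemma legal_dec_sizeP m k : legal_dec_size a s b m k <->
  exists L, [/\ legalb L, sum_a L = m & size L = k].
Proof. by split; case=> L [L_legal sum_L size_L]; exists L; split=> //; apply/legalP. Qed.

Lemma legal_dec_size0 k : legal_dec_size a s b 0 k <-> k = 0.
Proof.
rewrite legal_dec_sizeP; split=> [[[|x L] [xL_legal sum_L <-]] //|->].
  move: xL_legal sum_L; rewrite legalb_cons big_cons => /and3P[x_gt0 _ _].
  by have := a_gt0 x_gt0; lia.
by exists [::]; rewrite big_nil.
Qed.

Lemma legal_dec_size_addl i m k : 0 < i -> m < a (succ_bound i) ->
  legal_dec_size a s b (a i + m) k <->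
  exists2 k', k = k'.+1 & legal_dec_size a s b m k'.
Proof.
move=> i_gt0 lt_m; rewrite legal_dec_sizeP; split.
- case=> L [L_legal sum_L size_L].
  have /has_legal_dec_belowP[L' [L'_legal L'_below sum_L']] :=
    (dec_cover_bound (succ_bound_gt0 i)).1 m lt_m.
  have iL'_legal : legalb (i :: L') by rewrite legalb_cons i_gt0 L'_below.
  have eq_L : L = i :: L' by apply: legalb_sum_inj; rewrite // sum_L big_cons sum_L'.
  by exists (size L'); [rewrite -size_L eq_L | apply/legal_dec_sizeP; exists L'].
- case=> k' -> /legal_dec_sizeP[L [L_legal sum_L size_L]].
  have L_below : all (fun j => j < succ_bound i) L.
    by apply: legalb_below_of_sum_lt; rewrite ?succ_bound_gt0 ?sum_L.
  exists (i :: L); split; first by rewrite legalb_cons i_gt0 L_below.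
  + by rewrite big_cons sum_L.
  + by rewrite /= size_L.
Qed.

Lemma count_range_cat lo mid hi k : lo <= mid <= hi ->
  count_range a s b lo hi k = count_range a s b lo mid k + count_range a s b mid hi k.
Proof.
case/andP=> le_lo le_hi; rewrite /count_range.
have -> : hi - lo = (mid - lo) + (hi - mid) by lia.
by rewrite iotaD count_cat subnKC.
Qed.

Lemma count_range_succ i k : 0 < i ->
  count_range a s b (a i) (a i.+1) k =
  if k is k'.+1 then count_range a s b 0 (a (succ_bound i)) k' else 0.
Proof.
move=> i_gt0; rewrite /count_range a_succ // addKn subn0.
rewrite -[X in iota X _]addn0 iotaDl count_map.
case: k => [|k].
  rewrite (@eq_in_count _ _ pred0) ?count_pred0 // => m.
  rewrite mem_iota add0n => /andP[_ lt_m] /=.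
  by apply: asboolF => /(legal_dec_size_addl _ i_gt0 lt_m) [].
apply: eq_in_count => m; rewrite mem_iota add0n => /andP[_ lt_m] /=.
apply/asboolP/asboolP => [/(legal_dec_size_addl _ i_gt0 lt_m) [k' [->]] //|dec_m].
by apply/(legal_dec_size_addl _ i_gt0 lt_m); exists k.
Qed.

Lemma count_range_block n j k : j <= b ->
  count_range a s b (a (n * b + 1)) (a (n * b + 1 + j)) k =
  j * (if k is k'.+1 then qnk a s b (n - s) k' else 0).
Proof.
elim: j => [|j IH] le_jb; first by rewrite addn0 /count_range subnn.
rewrite (count_range_cat (mid := a (n * b + 1 + j))); last first.
  by apply/andP; split; rewrite leq_a; lia.
rewrite IH 1?ltnW // (addnS (n * b + 1) j) count_range_succ; last lia.
by rewrite succ_bound_block // mulSn addnC.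
Qed.

Lemma pnk0 k : pnk a s b 0 k = (k == 0).
Proof.
rewrite /pnk /count_range /= a1 subn0 /=.
case: k => [|k] /=; first by rewrite asboolT //; apply/legal_dec_size0.
by rewrite addn0 asboolF // => /legal_dec_size0.
Qed.

Lemma pnk_succ n k :
  pnk a s b n.+1 k = b * (if k is k'.+1 then qnk a s b (n - s) k' else 0).
Proof. by rewrite /pnk /= mulSnr -addnA (addnC b) addnA count_range_block. Qed.

Lemma qnk0 k : qnk a s b 0 k = (k == 0).
Proof. exact: pnk0. Qed.

Lemma qnk_succ n k : qnk a s b n.+1 k = qnk a s b n k + pnk a s b n.+1 k.
Proof.
rewrite /qnk /pnk /= (count_range_cat (mid := a (n * b + 1))) //.
by rewrite leq0n leq_a //; lia.
Qed.

Lemma qnk_eq0 n k : n + s < k * s.+1 -> qnk a s b n k = 0.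
Proof.
move=> lt_nk; rewrite /qnk /count_range subn0.
rewrite (@eq_in_count _ _ pred0) ?count_pred0 // => m.
rewrite mem_iota add0n => /andP[_ lt_m] /=.
apply: asboolF => /legal_dec_sizeP [[|x L] [L_legal sum_L size_L]].
  by rewrite -size_L in lt_nk.
have /= /andP[lt_x _] : all (fun j => j < n * b + 1) (x :: L).
  by apply: legalb_below_of_sum_lt; rewrite ?sum_L // addn1.
have := legalb_size_bin L_legal; move: L_legal; rewrite legalb_cons => /and3P[x_gt0 _ _].
have : bin x <= n by rewrite bin_leq //; lia.
by move: lt_nk; rewrite -size_L /= mulSn; lia.
Qed.

Lemma pnk_formula n k : pnk a s b n k =
  (if (n == 0) && (k == 0) then 1
   else if (1 <= n <= s) && (k == 1) then b
   else if [&& s.+1 <= n, 1 <= k & k * s.+1 <= n + s]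
        then b * qnk a s b (n - s.+1) (k - 1)
   else 0).
Proof.
case: n => [|n]; first by rewrite pnk0; case: k.
rewrite pnk_succ /=; case: k => [|k]; first by rewrite muln0 !andbF.
rewrite subSS subn1 /=; case: (ltnP n s) => [lt_ns|le_sn].
  have -> : n - s = 0 by lia.
  by rewrite qnk0; case: k => [|k] /=; rewrite ?muln1 // muln0; case: ifP.
rewrite /= ltnS le_sn /=; case: ifP => // /negbT; rewrite -ltnNge => lt_nk.
by rewrite qnk_eq0 ?muln0 //; move: lt_nk; rewrite mulSn; lia.
Qed.

Lemma pnk_eq0 n k : nstar s n < k -> pnk a s b n k = 0.
Proof.
rewrite pnk_formula /nstar ltnNge leq_divRL // -ltnNge => nstar_k.
case: ifP => [/andP[_ /eqP k0]|_]; first by rewrite k0 in nstar_k.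
case: ifP => [/andP[/andP[n_gt0 _] /eqP k1]|_]; first by move: nstar_k; rewrite k1; lia.
by case: ifP => // /and3P[_ _ le_k]; move: nstar_k; lia.
Qed.

(* The coefficients of F - 1. *)
Definition pnk_tail n k := if n is 0 then 0 else pnk a s b n k.

Lemma pnk_tail_n0 n : pnk_tail n 0 = 0.
Proof. by case: n => //= n; rewrite pnk_succ muln0. Qed.

Lemma pnk_tail_rec n k : pnk_tail n k =
  pnk_tail n.-1 k + b * pnk_tail (n - s.+1) k.-1 + b * (n == 1) * (k == 1).
Proof.
case: n => [|[|n]]; first by rewrite muln0.
  rewrite /= pnk_succ sub0n muln0.
  by case: k => [|[|k]]; rewrite /= ?qnk0 ?muln0 ?muln1.
rewrite /= !pnk_succ muln0 addn0; case: k => [|k]; first by rewrite pnk_tail_n0 muln0.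
rewrite subSS; case: (leqP s n) => [le_sn|lt_ns].
  by rewrite subSn // qnk_succ mulnDr.
have [-> ->] : n.+1 - s = 0 /\ n - s = 0 by lia.
by rewrite /= muln0 addn0.
Qed.

Lemma coef_genF n k : ((genF a s b n)`_k = (pnk a s b n k)%:R)%R.
Proof.
rewrite /genF big_mkord.
rewrite (eq_bigr (fun i : 'I__ => (pnk a s b n i)%:R *: 'X^i)%R); last first.
  by move=> i _; rewrite scaler_nat mulr_natl.
rewrite -(poly_def _ (fun i => (pnk a s b n i)%:R%R)) coef_poly.
by case: ltnP => // /pnk_eq0->.
Qed.

Lemma coef_genF_sub1 n k :
  ((fps_sub (genF a s b) fps_one n)`_k = (pnk_tail n k)%:R)%R.
Proof.
rewrite coefB coef_genF coefMn coef1; case: n => [|n] /=; last by rewrite subr0.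
by rewrite pnk0; case: k.
Qed.

Lemma genF_identity :
  fps_mul (denomD s b) (fps_sub (genF a s b) fps_one) = numerN b.
Proof.
apply: funext => n; rewrite /fps_mul /denomD /numerN.
set G := fps_sub (genF a s b) fps_one.
(* F - 1 has no constant term, so the deltas at j > n contribute nothing. *)
have G_shift j : 0 < j -> ((j < n.+1)%N%:R * G (n - j)%N = G (n - j)%N)%R.
  move=> j_gt0; case: ltnP => [_|le_nj]; first by rewrite mul1r.
  have -> : n - j = 0 by lia.
  by rewrite mul0r; apply/esym/polyP => k; rewrite coef_genF_sub1 coef0.
under eq_bigr => i _ do rewrite !mulrBl -mulrA.
rewrite !sumrB !(sum_ord_delta _ _ (fun i => G (n - i)%N)).
rewrite (sum_ord_delta _ _ (fun i => b%:R * 'X * G (n - i)%N)%R).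
rewrite mul1r subn0 G_shift // mulrCA G_shift //.
apply/polyP => k; rewrite coefB coefB -mulrA !mulr_natl !coefMn coefXM.
rewrite !coef_genF_sub1 coefX subn1 pnk_tail_rec.
by case: k => [|k]; rewrite ?pnk_tail_n0 -!mulrnA ?mul0rn /=; lia.
Qed.

End Sequence.
End Generacci.

Unset Implicit Arguments.

Theorem proposition2p13 (s b : nat) (a : nat -> nat) :
  (1 <= s)%N -> (1 <= b)%N -> is_generacci s b a ->
  (forall n k : nat,
     pnk a s b n k =
       (if (n == 0) && (k == 0) then 1
        else if (1 <= n <= s) && (k == 1) then b
        else if [&& s.+1 <= n, 1 <= k & k * s.+1 <= n + s]
             then b * qnk a s b (n - s.+1) (k - 1)
        else 0)%N) /\
  (* F = 1 + b y x / (1 - x - b y x^(s+1)), i.e. (1 - x - b y x^(s+1)) (F - 1) = b y x *)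
  fps_mul (denomD s b) (fps_sub (genF a s b) fps_one) = numerN b.
Proof.
move=> _ b_gt0 gen_a; split; first exact: pnk_formula.
exact: genF_identity.
Qed.
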